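(* In the setting of the context, for $i\in\{1,2\}$ and $\lambda>0$ let $\mathbf s_i(\lambda)=\big(\mathbf X_{s,1}\otimes\mathbf X_{s,2,i}+\lambda\mathbf I\big)^{-1}\mathbf x_{s,3,i}$ and $g(\lambda)=\mathrm{Tr}(\mathbf s_i(\lambda)\mathbf s_i(\lambda)^H)=\|\mathbf s_i(\lambda)\|_2^2$ (which equals $\mathrm{Tr}(\mathbf S_i\mathbf S_i^H)$ for $\mathbf s_i=\mathrm{vec}(\mathbf S_i)$). Then $g$ is monotonically non-increasing in $\lambda$, and if $\lambda_i>0$ satisfies $g(\lambda_i)=\tau_i$ (with $\tau_i>0$), then $$\lambda_i\le\sqrt{\frac{\sigma_{s,3,i}}{\tau_i}}-\sigma_{s,\min,i},$$ where $\sigma_{s,3,i}=\|\mathbf x_{s,3,i}\|_2^2$ and $\sigma_{s,\min,i}$ is the smallest eigenvalue of $\mathbf X_{s,1}\otimes\mathbf X_{s,2,i}$.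
   Context: MAC phase of a MIMO two-way relay system (sources with $N_1,N_2$ antennas, relay with $M$ antennas, training length $L_S$). Let $\mathbf Z_{t,H_i}\in\mathbb C^{N_i\times N_i}$ ($i=1,2$) be Hermitian positive definite with $\mathbf Z_{t,H_i}=\mathbf C_{t,H_i}\mathbf C_{t,H_i}^H$, $\mathbf C_{t,H}=\mathrm{Blkdiag}(\mathbf C_{t,H_1},\mathbf C_{t,H_2})$; let $\mathbf K_{q,R}\in\mathbb C^{L_S\times L_S}$ be Hermitian positive definite (temporal disturbance covariance at the relay; here the spatial disturbance covariance equals the receive channel covariance, $\mathbf K_{r,R}=\mathbf Z_{r,H}$). Given any $\mathbf S\in\mathbb C^{(N_1+N_2)\times L_S}$ (current training), define $\mathbf T_{R,1}=\mathbf C_{t,H}^H\mathbf S^*\big(\mathbf S^T\mathbf C_{t,H}\mathbf C_{t,H}^H\mathbf S^*+\mathbf K_{q,R}\big)^{-1}\in\mathbb C^{(N_1+N_2)\times L_S}$, let $\mathbf T_{R,1,1}$ be its first $N_1$ rows and $\mathbf T_{R,1,2}$ its last $N_2$ rows, and set $\mathbf X_{s,1}=\mathbf T_{R,1}^H\mathbf C_{t,H}^H\mathbf C_{t,H}\mathbf T_{R,1}$, $\mathbf X_{s,2,i}=\mathbf Z_{t,H_i}^T$, $\mathbf x_{s,3,i}=\mathrm{vec}\big((\mathbf T_{R,1,i}^H\mathbf C_{t,H_i}^H\mathbf Z_{t,H_i}^H)^T\big)$. *)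

(* Complex scalars: an arbitrary numClosedFieldType C
   (e.g. complex R over a real closed field, or algC). *)
From HB Require Import structures.
From mathcomp Require Import all_boot all_order all_algebra.
From mathcomp Require Import mxtens.
Set Implicit Arguments.
Unset Strict Implicit.
Unset Printing Implicit Defensive.
Import Order.TTheory GRing.Theory Num.Theory.
Local Open Scope ring_scope.

Section Defs.
Variable C : numClosedFieldType.

Definition conjm {m n} (A : 'M[C]_(m, n)) : 'M[C]_(m, n) := map_mx Num.conj A.
Definition hermt {m n} (A : 'M[C]_(m, n)) : 'M[C]_(n, m) := (conjm A)^T.

(* Kronecker product A (x) B : the library's tensmx (row index i*p+k). *)
Definition kron {m n p q} (A : 'M[C]_(m, n)) (B : 'M[C]_(p, q))
  : 'M[C]_(m * p, n * q) := tensmx A B.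

(* vec : column-stacking vectorization of an a x b matrix, entry (i,j)
   goes to index j*a + i. *)
Definition vec {a b} (M : 'M[C]_(a, b)) : 'cV[C]_(b * a) :=
  \col_k M (mxtens_unindex k).2 (mxtens_unindex k).1.

Definition herm_posdef {n} (A : 'M[C]_n) : Prop :=
  hermt A = A /\ forall v : 'cV[C]_n, v != 0 -> 0 < (hermt v *m A *m v) 0 0.

Definition is_min_eigenvalue {n} (A : 'M[C]_n) (a : C) : Prop :=
  eigenvalue A a /\ forall b, eigenvalue A b -> a <= b.

Definition sqnorm {n} (x : 'cV[C]_n) : C := \sum_k `|x k 0| ^+ 2.

(* The claim of the lemma for one source index i, given
   X1 = X_{s,1} (L x L), Zi = Z_{t,H_i}, Ci = C_{t,H_i} (N x N),
   Ti = T_{R,1,i} (N x L). *)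
Definition lemma2_claim {L N} (X1 : 'M[C]_L) (Zi Ci : 'M[C]_N)
    (Ti : 'M[C]_(N, L)) : Prop :=
  let A : 'M[C]_(L * N) := kron X1 (Zi^T) in           (* X_{s,1} (x) X_{s,2,i} *)
  let x3 : 'cV[C]_(L * N) :=
      vec ((hermt Ti *m hermt Ci *m hermt Zi)^T) in     (* x_{s,3,i} *)
  let s (lam : C) : 'cV[C]_(L * N) := invmx (A + lam%:M) *m x3 in
  let g (lam : C) : C := \tr (s lam *m hermt (s lam)) in
  (forall l1 l2 : C, 0 < l1 -> l1 <= l2 -> g l2 <= g l1) /\
  (forall (lam tau smin : C), 0 < lam -> 0 < tau -> g lam = tau ->
     is_min_eigenvalue A smin ->
     lam <= sqrtC (sqnorm x3 / tau) - smin).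
End Defs.

From HB Require Import structures.
From mathcomp Require Import all_boot all_order all_algebra.
From mathcomp Require Import mxtens spectral.
Set Implicit Arguments.
Unset Strict Implicit.
Unset Printing Implicit Defensive.
Import Order.TTheory GRing.Theory Num.Theory Num.Def.
Local Open Scope ring_scope.

(* Both Kronecker factors are Gram matrices: X_{s,1} = (C T)^H (C T) and
   Z^T = conj(C) conj(C)^H.  Hence A = X_{s,1} (x) Z^T = G G^H for
   G = (C T)^H (x) conj(C), so A = P^H diag(d) P with P unitary and d >= 0.
   Then g(lam) = sum_k |(P x)_k|^2 / (d_k + lam)^2, each term of which is
   non-increasing in lam, and d_k >= sigma_min gives
   tau = g(lam) <= |x|^2 / (sigma_min + lam)^2, which rearranges to the bound. *)

Section ComplexMatrices.
Variable C : numClosedFieldType.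

Lemma hermtE m n (A : 'M[C]_(m, n)) : hermt A = map_mx conjC A^T.
Proof. by rewrite /hermt /conjm map_trmx. Qed.

Lemma hermtM m n p (A : 'M[C]_(m, n)) (B : 'M[C]_(n, p)) :
  hermt (A *m B) = hermt B *m hermt A.
Proof. by rewrite /hermt /conjm map_mxM trmx_mul. Qed.

Lemma conjmK m n (A : 'M[C]_(m, n)) : conjm (conjm A) = A.
Proof. by rewrite /conjm -map_mx_comp map_mx_id // => z; exact: conjCK. Qed.

Lemma hermtK m n (A : 'M[C]_(m, n)) : hermt (hermt A) = A.
Proof. by rewrite /hermt /conjm map_trmx trmxK; exact: conjmK. Qed.

Lemma hermt_conjm m n (A : 'M[C]_(m, n)) : hermt (conjm A) = A^T.
Proof. by rewrite /hermt conjmK. Qed.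

Lemma hermt_tens m n p q (A : 'M[C]_(m, n)) (B : 'M[C]_(p, q)) :
  hermt (tensmx A B) = tensmx (hermt A) (hermt B).
Proof. by rewrite /hermt /conjm map_mxT trmx_tens. Qed.

Lemma mulmx_hermt_entry p q r (X : 'M[C]_(p, r)) (Y : 'M[C]_(q, r)) i j :
  (X *m hermt Y) i j = (row i X *m hermt (row j Y)) 0 0.
Proof. by rewrite !mxE; apply: eq_bigr => k _; rewrite !mxE. Qed.

Lemma rv_sqnormE m (v : 'rV[C]_m) : (v *m hermt v) 0 0 = \sum_j `|v 0 j| ^+ 2.
Proof. by rewrite !mxE; apply: eq_bigr => j _; rewrite !mxE normCK. Qed.

Lemma rv_sqnorm_ge0 m (v : 'rV[C]_m) : 0 <= (v *m hermt v) 0 0.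
Proof. by rewrite rv_sqnormE; apply: sumr_ge0 => j _; exact: exprn_ge0. Qed.

Lemma rv_sqnorm_gt0 m (v : 'rV[C]_m) : v != 0 -> 0 < (v *m hermt v) 0 0.
Proof.
move=> v_neq0; rewrite lt_def rv_sqnorm_ge0 andbT rv_sqnormE.
apply: contra v_neq0; rewrite psumr_eq0 => [/allP v0|j _]; last exact: exprn_ge0.
apply/eqP/rowP => j; rewrite mxE.
by have /= := v0 j (mem_index_enum _); rewrite sqrf_eq0 normr_eq0 => /eqP.
Qed.

Lemma sqnormE n (x : 'cV[C]_n) : sqnorm x = (hermt x *m x) 0 0.
Proof. by rewrite /sqnorm !mxE; apply: eq_bigr => j _; rewrite !mxE normCKC. Qed.

Lemma mxtrace_mulmx_hermt n (x : 'cV[C]_n) : \tr (x *m hermt x) = sqnorm x.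
Proof. by rewrite mxtrace_mulC trace_mx11 sqnormE. Qed.

Lemma sqnorm_diag_mul n (r : 'rV[C]_n) (y : 'cV[C]_n) :
  sqnorm (diag_mx r *m y) = \sum_k `|r 0 k| ^+ 2 * `|y k 0| ^+ 2.
Proof.
by apply: eq_bigr => k _; rewrite mul_diag_mx mxE normrM exprMn.
Qed.

Lemma ler_pdivXn2l (c a b : C) : 0 <= c -> 0 < b -> b <= a ->
  c / a ^+ 2 <= c / b ^+ 2.
Proof.
move=> c_ge0 b_gt0 le_ba; have a_gt0 := lt_le_trans b_gt0 le_ba.
apply: ler_wpM2l => //; rewrite lef_pV2 ?posrE ?exprn_gt0 //.
by rewrite lerXn2r ?nnegrE ?(ltW a_gt0) ?(ltW b_gt0).
Qed.

Lemma le_sqrtC_div (q t a : C) : 0 < t -> 0 < a -> t <= q / a ^+ 2 ->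
  a <= sqrtC (q / t).
Proof.
move=> t_gt0 a_gt0 le_tq; have a2_gt0 : 0 < a ^+ 2 by exact: exprn_gt0.
have le_a2 : a ^+ 2 <= q / t.
  by rewrite ler_pdivlMr // mulrC -ler_pdivlMr.
rewrite -(sqrCK (ltW a_gt0)) ler_sqrtC // nnegrE ?ltW //.
exact: lt_le_trans a2_gt0 le_a2.
Qed.

Section UnitaryConjugation.
Variables (n : nat) (P : 'M[C]_n).
Hypothesis P_unitary : P \is unitarymx.

Lemma unitary_mulmx_hermt : P *m hermt P = 1%:M.
Proof. by rewrite hermtE; apply/unitarymxP. Qed.

Lemma unitary_hermt_mulmx : hermt P *m P = 1%:M.
Proof. by rewrite hermtE -[X in X = _]mul1mx mulmxA mulmxKtV. Qed.

Lemma sqnorm_unitary_mul (w : 'cV[C]_n) : sqnorm (P *m w) = sqnorm w.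
Proof.
rewrite !sqnormE hermtM mulmxA -[_ *m hermt P *m _]mulmxA.
by rewrite unitary_hermt_mulmx mulmx1.
Qed.

Lemma sqnorm_hermt_unitary_mul (w : 'cV[C]_n) : sqnorm (hermt P *m w) = sqnorm w.
Proof.
rewrite !sqnormE hermtM hermtK mulmxA -[_ *m P *m _]mulmxA.
by rewrite unitary_mulmx_hermt mulmx1.
Qed.

Lemma invmx_unitary_diag (r : 'rV[C]_n) : (forall k, r 0 k != 0) ->
  invmx (hermt P *m diag_mx r *m P) =
  hermt P *m diag_mx (\row_k (r 0 k)^-1) *m P.
Proof.
move=> r_neq0; set M := hermt P *m _ *m P; set Q := (X in _ = X).
have MQ : M *m Q = 1%:M.
  rewrite /M /Q !mulmxA -[_ *m P *m hermt P]mulmxA unitary_mulmx_hermt mulmx1.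
  rewrite -[_ *m diag_mx _ *m diag_mx _]mulmxA mulmx_diag.
  have -> : \row_j (r 0 j * (\row_k (r 0 k)^-1) 0 j) = const_mx 1.
    by apply/rowP => j; rewrite !mxE mulfV.
  by rewrite diag_const_mx mulmx1 unitary_hermt_mulmx.
have M_unit : M \in unitmx by case/mulmx1_unit: MQ.
by rewrite -[invmx M]mulmx1 -MQ mulmxA mulVmx // mul1mx.
Qed.

End UnitaryConjugation.

Section GramMatrix.
Variables (n m : nat) (K : 'M[C]_(n, m)).
Local Notation A := (K *m hermt K).
Local Notation P := (spectralmx A).
Local Notation d := (spectral_diag A).

Lemma gram_normalmx : A \is normalmx.
Proof. by apply/normalmxP; rewrite -hermtE hermtM hermtK. Qed.

Lemma eigenvalue_gram_ge0 a : eigenvalue A a -> 0 <= a.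
Proof.
case/eigenvalueP => v vA v_neq0.
have : 0 <= (v *m A *m hermt v) 0 0.
  by rewrite mulmxA -(mulmxA (v *m K)) -hermtM rv_sqnorm_ge0.
by rewrite vA -scalemxAl mxE (pmulr_lge0 _ (rv_sqnorm_gt0 v_neq0)).
Qed.

Lemma gram_spectral_decomp : A = hermt P *m diag_mx d *m P.
Proof.
rewrite (hermtE P) -invmx_unitary ?spectral_unitarymx //.
exact/orthomx_spectralP/gram_normalmx.
Qed.

Lemma spectral_mulmx_gram : P *m A = diag_mx d *m P.
Proof.
transitivity (P *m (hermt P *m diag_mx d *m P)).
  by rewrite -gram_spectral_decomp.
by rewrite !mulmxA unitary_mulmx_hermt ?spectral_unitarymx ?mul1mx.
Qed.

Lemma spectral_diag_eigenvalue k : eigenvalue A (d 0 k).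
Proof.
have P_unitary := spectral_unitarymx A.
apply/eigenvalueP; exists (row k P).
  rewrite -row_mul spectral_mulmx_gram mul_diag_mx.
  by apply/rowP => j; rewrite !mxE.
apply/eqP => Pk0; move/matrixP/(_ k k): (unitary_mulmx_hermt P_unitary).
rewrite mulmx_hermt_entry Pk0 mul0mx !mxE eqxx => /eqP.
by rewrite eq_sym oner_eq0.
Qed.

Lemma spectral_diag_ge0 k : 0 <= d 0 k.
Proof. exact/eigenvalue_gram_ge0/spectral_diag_eigenvalue. Qed.

Lemma gram_shift_decomp lam :
  A + lam%:M = hermt P *m diag_mx (\row_k (d 0 k + lam)) *m P.
Proof.
have -> : \row_k (d 0 k + lam) = d + const_mx lam by apply/rowP => k; rewrite !mxE.
rewrite raddfD /= diag_const_mx mulmxDr mulmxDl -gram_spectral_decomp.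
rewrite mul_mx_scalar -scalemxAl.
by rewrite unitary_hermt_mulmx ?spectral_unitarymx ?scalemx1.
Qed.

Lemma sqnorm_gram_resolvent x lam : 0 < lam ->
  sqnorm (invmx (A + lam%:M) *m x) =
  \sum_k `|(P *m x) k 0| ^+ 2 / (d 0 k + lam) ^+ 2.
Proof.
move=> lam_gt0.
have dlam_gt0 k : 0 < d 0 k + lam by rewrite ltr_wpDl ?spectral_diag_ge0.
have dlam_neq0 k : (\row_k (d 0 k + lam)) 0 k != 0 by rewrite mxE gt_eqF.
rewrite gram_shift_decomp invmx_unitary_diag ?spectral_unitarymx //.
rewrite -!mulmxA sqnorm_hermt_unitary_mul ?spectral_unitarymx // sqnorm_diag_mul.
apply: eq_bigr => k _; rewrite [_ 0 k]mxE [_ 0 k]mxE.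
by rewrite normfV ger0_norm ?ltW // exprVn mulrC.
Qed.

Lemma sqnorm_gram_resolvent_nonincr x l1 l2 : 0 < l1 -> l1 <= l2 ->
  sqnorm (invmx (A + l2%:M) *m x) <= sqnorm (invmx (A + l1%:M) *m x).
Proof.
move=> l1_gt0 le_l12; have l2_gt0 := lt_le_trans l1_gt0 le_l12.
rewrite !sqnorm_gram_resolvent //; apply: ler_sum => k _.
by apply: ler_pdivXn2l; rewrite ?exprn_ge0 ?ltr_wpDl ?spectral_diag_ge0 ?lerD2l.
Qed.

Lemma sqnorm_gram_resolvent_le x lam s : 0 < lam -> is_min_eigenvalue A s ->
  sqnorm (invmx (A + lam%:M) *m x) <= sqnorm x / (s + lam) ^+ 2.
Proof.
move=> lam_gt0 [s_eig s_min]; have s_ge0 := eigenvalue_gram_ge0 s_eig.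
rewrite sqnorm_gram_resolvent // -(sqnorm_unitary_mul (spectral_unitarymx A) x).
rewrite /sqnorm mulr_suml; apply: ler_sum => k _.
apply: ler_pdivXn2l; rewrite ?exprn_ge0 ?ltr_wpDl //.
by rewrite lerD2r s_min ?spectral_diag_eigenvalue.
Qed.

End GramMatrix.

Lemma kron_gram k l p q (M : 'M[C]_(k, l)) (B : 'M[C]_(p, q)) :
  let G := tensmx (hermt M) (conjm B) in
  kron (hermt M *m M) (B *m hermt B)^T = G *m hermt G.
Proof.
by rewrite /= hermt_tens hermtK hermt_conjm tensmx_mul trmx_mul /hermt trmxK.
Qed.

Lemma lemma2_claim_gram L N k (X1 : 'M[C]_L) (Zi Ci : 'M[C]_N)
    (Ti : 'M[C]_(N, L)) (M : 'M[C]_(k, L)) :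
  X1 = hermt M *m M -> Zi = Ci *m hermt Ci -> lemma2_claim X1 Zi Ci Ti.
Proof.
move=> -> ->; rewrite /lemma2_claim kron_gram; split.
  move=> l1 l2 l1_gt0 le_l12; rewrite !mxtrace_mulmx_hermt.
  exact: sqnorm_gram_resolvent_nonincr.
move=> lam tau s lam_gt0 tau_gt0 g_lam s_min.
have s_ge0 := eigenvalue_gram_ge0 s_min.1.
rewrite lerBrDr addrC; apply: le_sqrtC_div; rewrite ?ltr_wpDl // -g_lam.
by rewrite mxtrace_mulmx_hermt sqnorm_gram_resolvent_le.
Qed.

End ComplexMatrices.

Theorem lemma2 (C : numClosedFieldType) (N1 N2 LS : nat)
  (Ct1 : 'M[C]_N1) (Ct2 : 'M[C]_N2) (Zt1 : 'M[C]_N1) (Zt2 : 'M[C]_N2)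
  (Kq : 'M[C]_LS) (S : 'M[C]_(N1 + N2, LS)) :
  herm_posdef Zt1 -> Zt1 = Ct1 *m hermt Ct1 ->
  herm_posdef Zt2 -> Zt2 = Ct2 *m hermt Ct2 ->
  herm_posdef Kq ->
  let Ct : 'M[C]_(N1 + N2) := block_mx Ct1 0 0 Ct2 in
  let TR1 : 'M[C]_(N1 + N2, LS) :=
    hermt Ct *m conjm S *m invmx (S^T *m Ct *m hermt Ct *m conjm S + Kq) in
  let TR11 : 'M[C]_(N1, LS) := usubmx TR1 in
  let TR12 : 'M[C]_(N2, LS) := dsubmx TR1 in
  let Xs1 : 'M[C]_LS := hermt TR1 *m hermt Ct *m Ct *m TR1 in
  lemma2_claim Xs1 Zt1 Ct1 TR11 /\ lemma2_claim Xs1 Zt2 Ct2 TR12.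
Proof.
move=> _ Zt1_gram _ Zt2_gram _ Ct TR1 TR11 TR12 Xs1.
have Xs1_gram : Xs1 = hermt (Ct *m TR1) *m (Ct *m TR1).
  by rewrite /Xs1 hermtM !mulmxA.
by split; apply: lemma2_claim_gram Xs1_gram _.
Qed.
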